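(* Let $M,N$ be weights of $\mathbb{R}^m,\mathbb{R}^n$, let $A\in\mathbb{R}^{m\times n}$ with $MA=AN$, and let $K\subseteq\mathbb{R}^n$ be a closed cone. Then $$\big((A^{[\dagger]})^{[*]}\circ I\circ K^{[*]}\big)^{[*]}\subseteq A\circ I\circ K+\mathcal{N}\big((A\circ I)^{[*]}\big).$$ If moreover $A^{[\dagger]}\circ A\circ K\subseteq K$, then equality holds.
   Context: A weight is a real symmetric matrix $W$ with $W^2=I$. $\mathbb{R}^m$ and $\mathbb{R}^n$ carry weights $M\in\mathbb{R}^{m\times m}$ and $N\in\mathbb{R}^{n\times n}$, respectively. The indefinite inner product on the space with weight $W$ is $[x,y]=\langle x,Wy\rangle$. Indefinite matrix product: if $B$ has $p$ columns and $C$ has $p$ rows (or is a vector in $\mathbb{R}^p$), $p\in\{m,n\}$, and $W$ is the weight of $\mathbb{R}^p$, then $B\circ C:=BWC$. $I$ denotes an identity matrix of the appropriate size. Indefinite adjoint of $B\in\mathbb{R}^{p\times q}$: $B^{[*]}:=W_qB^TW_p$, where $W_p,W_q$ are the weights of $\mathbb{R}^p,\mathbb{R}^q$. Indefinite Moore–Penrose inverse: $A^{[\dagger]}$ is the unique $X\in\mathbb{R}^{n\times m}$ such that - $A\circ X\circ A=A$, - $X\circ A\circ X=X$, - $(A\circ X)^{[*]}=A\circ X$, - $(X\circ A)^{[*]}=X\circ A$. It equals $NA^\dagger M$. Range and null space: for a matrix $B$ with $q$ columns, $\mathcal{R}(B)=\{B\circ x:x\in\mathbb{R}^q\}$ and $\mathcal{N}(B)=\{x\in\mathbb{R}^q:B\circ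 x=0\}$. A cone is a nonempty set closed under addition and under multiplication by nonnegative scalars. For $S$ a subset of $\mathbb{R}^p$ with weight $W$, the dual is $S^{[*]}=\{x\in\mathbb{R}^p:[x,t]\ge0\ \forall t\in S\}$; duals of subsets of $\mathbb{R}^m$ use $M$. For a matrix $B$ and a set $S$, $B\circ S=\{B\circ s:s\in S\}$. The sum of sets is the Minkowski sum. *)

From Stdlib Require Import Reals.
From mathcomp Require Import ssreflect ssrfun ssrbool eqtype ssrnat seq fintype bigop.
From HB Require Import structures.

Set Implicit Arguments.
Unset Strict Implicit.

Local Open Scope R_scope.

Lemma Rplus_assoc' : associative Rplus.
Proof. by move=> x y z; rewrite Rplus_assoc. Qed.
HB.instance Definition _ := Monoid.isComLaw.Build R 0%R Rplus
  Rplus_assoc' Rplus_comm Rplus_0_l.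

Definition Vec (n : nat) := 'I_n -> R.
Definition Mat (m n : nat) := 'I_m -> 'I_n -> R.

Definition mmul {m p q : nat} (A : Mat m p) (B : Mat p q) : Mat m q :=
  fun i j => \big[Rplus/0%R]_(k < p) (A i k * B k j).
Definition mvec {m p : nat} (A : Mat m p) (x : Vec p) : Vec m :=
  fun i => \big[Rplus/0%R]_(k < p) (A i k * x k).
Definition trmat {m n : nat} (A : Mat m n) : Mat n m := fun i j => A j i.
Definition idmat (n : nat) : Mat n n :=
  fun i j => if i == j then 1%R else 0%R.
Definition zerovec (n : nat) : Vec n := fun _ => 0%R.
Arguments idmat n : clear implicits.
Arguments zerovec n : clear implicits.

Definition dot {n : nat} (x y : Vec n) : R :=
  \big[Rplus/0%R]_(k < n) (x k * y k).

Definition is_weight {n : nat} (W : Mat n n) : Prop :=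
  trmat W = W /\ mmul W W = idmat n.

Definition iip {n : nat} (W : Mat n n) (x y : Vec n) : R := dot x (mvec W y).

(* indefinite matrix product B o C := B W C, W = weight of R^p *)
Definition imul {m p q : nat} (W : Mat p p) (B : Mat m p) (C : Mat p q) : Mat m q :=
  mmul (mmul B W) C.
Definition imulv {m p : nat} (W : Mat p p) (B : Mat m p) (x : Vec p) : Vec m :=
  mvec (mmul B W) x.

(* indefinite adjoint of B in R^{p x q}: B^[*] = Wq B^T Wp *)
Definition iadj {p q : nat} (Wp : Mat p p) (Wq : Mat q q) (B : Mat p q) : Mat q p :=
  mmul (mmul Wq (trmat B)) Wp.

(* X is the indefinite Moore-Penrose inverse of A (A : m x n, X : n x m),
   M weight of R^m, N weight of R^n: the four defining equations *)
Definition is_imp {m n : nat} (M : Mat m m) (N : Mat n n) (A : Mat m n) (X : Mat n m)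
  : Prop :=
  imul M (imul N A X) A = A /\
  imul N (imul M X A) X = X /\
  iadj M M (imul N A X) = imul N A X /\
  iadj N N (imul M X A) = imul M X A.

Definition vset (n : nat) := Vec n -> Prop.

Definition vsubset {n : nat} (S T : vset n) : Prop := forall x, S x -> T x.

Definition irange {p q : nat} (W : Mat q q) (B : Mat p q) : vset p :=
  fun y => exists x : Vec q, y = imulv W B x.
Definition inull {p q : nat} (W : Mat q q) (B : Mat p q) : vset q :=
  fun x => imulv W B x = zerovec p.

Definition is_cone {n : nat} (K : vset n) : Prop :=
  (exists x, K x) /\
  (forall x y, K x -> K y -> K (fun i => x i + y i)) /\
  (forall (a : R) x, 0 <= a -> K x -> K (fun i => a * x i)).

(* topologically closed in R^n (contains all its adherent points;
   max-norm balls, same topology as the Euclidean one) *)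
Definition is_closed {n : nat} (K : vset n) : Prop :=
  forall x : Vec n,
    (forall eps : R, 0 < eps -> exists y, K y /\ forall i, Rabs (y i - x i) < eps) ->
    K x.

Definition idual {n : nat} (W : Mat n n) (S : vset n) : vset n :=
  fun x => forall t, S t -> 0 <= iip W x t.

Definition iimage {p q : nat} (W : Mat q q) (B : Mat p q) (S : vset q) : vset p :=
  fun y => exists s, S s /\ y = imulv W B s.

Definition msum {n : nat} (S T : vset n) : vset n :=
  fun z => exists x y, S x /\ T y /\ z = (fun i => x i + y i).

(* The identities of the indefinite Moore-Penrose inverse D of A reduce the
   statement to ordinary linear algebra: [x, D^[*] o I o s] = <D x, N s>,
   A o I o s = A s, the null space of (A o I)^[*] is the kernel of A^T, and
   D annihilates that kernel.  If x lies in the dual of D^[*] o I o K^[*],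
   then D x lies in the bidual of K, which is K itself because K is a closed
   cone (separation by the nearest point of K), and x = A (D x) + (x - A D x)
   with A^T (x - A D x) = 0 since A^T A D = A^T.  Conversely, on
   A K + ker A^T the map D reduces to D A, and D A K is contained in K by
   hypothesis. *)

From Stdlib Require Import Reals Lra Lia Classical ClassicalEpsilon.
From Stdlib Require Import FunctionalExtensionality.
From mathcomp Require Import ssreflect ssrfun ssrbool eqtype ssrnat seq fintype.
From mathcomp Require Import bigop ssralg matrix Rstruct.
Import GRing.Theory.

Set Implicit Arguments.
Unset Strict Implicit.

Local Open Scope R_scope.

Lemma Un_cv_const (a : R) : Un_cv (fun _ => a) a.
Proof. by move=> eps eps_gt0; exists 0%nat => j _; rewrite Rdist_eq. Qed.

Lemma minimizing_sequence (T : Type) (S : T -> Prop) (f : T -> R) :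
  (exists t, S t) -> (forall t, S t -> 0 <= f t) ->
  exists delta (u : nat -> T), (forall t, S t -> delta <= f t) /\
    forall j, S (u j) /\ f (u j) < delta + / (INR j + 1).
Proof.
move=> [t0 St0] f_ge0.
pose E r := exists t, S t /\ r = - f t.
have [l [l_ub l_lub]] : {l | is_lub E l}.
  apply: completeness; last by exists (- f t0), t0.
  by exists 0 => _ [t [St ->]]; have := f_ge0 t St; lra.
have approx j : exists t, S t /\ f t < - l + / (INR j + 1).
  apply: NNPP => none.
  have : l <= l - / (INR j + 1).
    apply: l_lub => _ [t [St ->]].
    suff : ~ f t < - l + / (INR j + 1) by lra.
    by move=> lt; apply: none; exists t.
  have := RinvN_pos j; lra.
exists (- l), (fun j => proj1_sig (constructive_indefinite_description _ (approx j))).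
split=> [t St | j]; last exact: proj2_sig (constructive_indefinite_description _ (approx j)).
by have := l_ub _ (ex_intro _ t (conj St erefl)); lra.
Qed.

Section RealSums.
Variable I : Type.
Implicit Types (r : seq I) (F G H : I -> R).

Lemma big_lincomb r a b F G :
  \big[Rplus/0]_(i <- r) (a * F i + b * G i) =
  a * \big[Rplus/0]_(i <- r) F i + b * \big[Rplus/0]_(i <- r) G i.
Proof. elim: r => [|x r IH]; rewrite ?big_nil ?big_cons ?IH; lra. Qed.

Lemma big_lincomb3 r a b c F G H :
  \big[Rplus/0]_(i <- r) (a * F i + b * G i + c * H i) =
  a * \big[Rplus/0]_(i <- r) F i + b * \big[Rplus/0]_(i <- r) G i
  + c * \big[Rplus/0]_(i <- r) H i.
Proof. elim: r => [|x r IH]; rewrite ?big_nil ?big_cons ?IH; lra. Qed.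

Lemma big_Un_cv r (u : nat -> I -> R) (l : I -> R) :
  (forall i, Un_cv (fun j => u j i) (l i)) ->
  Un_cv (fun j => \big[Rplus/0]_(i <- r) u j i) (\big[Rplus/0]_(i <- r) l i).
Proof.
move=> cv_u; elim: r => [|x r IH].
  by rewrite big_nil; apply: Un_cv_ext (Un_cv_const 0) => j; rewrite big_nil.
rewrite big_cons; apply: Un_cv_ext (CV_plus _ _ _ _ (cv_u x) IH) => j.
by rewrite big_cons.
Qed.

End RealSums.

Lemma ge0_of_linear_bound a b :
  0 <= b -> (forall t, 0 < t <= 1 -> 0 <= 2 * a + t * b) -> 0 <= a.
Proof.
move=> b_ge0 bound; apply: Rnot_lt_le => a_lt0.
pose t := Rmin 1 (- a / (b + 1)).
have t_gt0 : 0 < t by apply: Rmin_pos; [lra | apply: Rdiv_lt_0_compat; lra].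
have tb : t * (b + 1) <= - a.
  have -> : - a = - a / (b + 1) * (b + 1) by field; lra.
  by apply: Rmult_le_compat_r; [lra | apply: Rmin_r].
have := bound t (conj t_gt0 (Rmin_l _ _)); nra.
Qed.

Section Vectors.
Variable n : nat.
Implicit Types (x y w k p : Vec n) (K : vset n).

Lemma dotC x y : dot x y = dot y x.
Proof. by apply: eq_bigr => i _; rewrite Rmult_comm. Qed.

Lemma dot_ge0 x : 0 <= dot x x.
Proof. by apply: big_ind => [|a b ? ?|i _]; [lra | lra | apply: Rle_0_sqr]. Qed.

Lemma sqr_coord_le_dot x i : x i * x i <= dot x x.
Proof.
rewrite /dot (bigD1 i) //=.
rewrite -{1}(Rplus_0_r (x i * x i)); apply: Rplus_le_compat_l.
by apply: big_ind => [|a b ? ?|j _]; [lra | lra | apply: Rle_0_sqr].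
Qed.

Lemma dot_eq0 x i : dot x x = 0 -> x i = 0.
Proof. by move=> x0; have := sqr_coord_le_dot x i; rewrite x0; nra. Qed.

Definition sqd x y := dot (fun i => x i - y i) (fun i => x i - y i).

Lemma sqr_coord_le_sqd x y i : (x i - y i) * (x i - y i) <= sqd x y.
Proof. exact: sqr_coord_le_dot (fun i => x i - y i) i. Qed.

Definition is_convex K := forall x y t,
  0 <= t <= 1 -> K x -> K y -> K (fun i => (1 - t) * x i + t * y i).

Lemma cone_convex K : is_cone K -> is_convex K.
Proof.
move=> [_ [K_add K_scale]] x y t t01 Kx Ky.
by apply: K_add; apply: K_scale => //; lra.
Qed.

Lemma sqd_parallelogram w x y :
  sqd x y = 2 * sqd w x + 2 * sqd w y
            + (-4) * sqd w (fun i => (1 - /2) * x i + /2 * y i).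
Proof. by rewrite /sqd /dot -big_lincomb3; apply: eq_bigr => i _; field. Qed.

Lemma sqd_convex_comb w p k t :
  sqd w (fun i => (1 - t) * p i + t * k i) =
  1 * sqd w p + (2 * t) * dot (fun i => p i - w i) (fun i => k i - p i)
  + (t * t) * sqd k p.
Proof. by rewrite /sqd /dot -big_lincomb3; apply: eq_bigr => i _; ring. Qed.

Lemma closed_Un_cv K (u : nat -> Vec n) (p : Vec n) :
  is_closed K -> (forall j, K (u j)) -> (forall i, Un_cv (fun j => u j i) (p i)) ->
  K p.
Proof.
move=> K_closed Ku cv_u; apply: K_closed => eps eps_gt0.
have [N close] : exists N, forall j, (j >= N)%coq_nat ->
    forall i, i \in index_enum 'I_n -> Rabs (u j i - p i) < eps.
  elim: (index_enum 'I_n) => [|i0 r [N IH]]; first by exists 0%nat.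
  have [N0 close0] := cv_u i0 eps eps_gt0.
  exists (Nat.max N N0) => j jN i; rewrite in_cons => /orP [/eqP -> | ir].
  - by apply: close0; lia.
  - by apply: IH => //; lia.
by exists (u N); split=> // i; apply: close; [lia | exact: mem_index_enum].
Qed.

Lemma minimizing_cauchy K w delta (u : nat -> Vec n) :
  is_convex K -> (forall k, K k -> delta <= sqd w k) ->
  (forall j, K (u j) /\ sqd w (u j) < delta + / (INR j + 1)) ->
  forall i, Cauchy_crit (fun j => u j i).
Proof.
move=> K_convex delta_le u_min i eps eps_gt0.
have [N small] := RinvN_cv (ltac:(nra) : eps * eps / 4 > 0).
have inv_small j : (j >= N)%coq_nat -> / (INR j + 1) < eps * eps / 4.
  move=> jN; have := small j jN; rewrite /Rdist Rminus_0_r Rabs_pos_eq //.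
  by apply: Rlt_le; apply: RinvN_pos.
exists N => a b aN bN; rewrite /Rdist -(Rabs_pos_eq eps); last lra.
apply: Rsqr_lt_abs_0; rewrite /Rsqr.
have mid := delta_le _ (K_convex _ _ (/2) ltac:(lra) (proj1 (u_min a)) (proj1 (u_min b))).
(* parallelogram law at the midpoint: sqd (u a) (u b) <= 2 / (a + 1) + 2 / (b + 1) *)
have := sqr_coord_le_sqd (u a) (u b) i; rewrite (sqd_parallelogram w).
have := inv_small a aN; have := inv_small b bN.
have := proj2 (u_min a); have := proj2 (u_min b); lra.
Qed.

Lemma closed_convex_nearest K w :
  (exists k, K k) -> is_convex K -> is_closed K ->
  exists p, K p /\ forall k, K k -> sqd w p <= sqd w k.
Proof.
move=> K_ne K_convex K_closed.
have [delta [u [delta_le u_min]]] :=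
  @minimizing_sequence _ K (sqd w) K_ne (fun k _ => dot_ge0 _).
have u_cauchy := minimizing_cauchy K_convex delta_le u_min.
pose p i := proj1_sig (R_complete _ (u_cauchy i)).
have cv_u i : Un_cv (fun j => u j i) (p i) := proj2_sig (R_complete _ (u_cauchy i)).
exists p; split=> [|k Kk]; first exact: closed_Un_cv K_closed (fun j => proj1 (u_min j)) cv_u.
suff : sqd w p <= delta by have := delta_le k Kk; lra.
apply: (@Rle_cv_lim (fun j => sqd w (u j)) (fun j => delta + / (INR j + 1))) => [j||].
- by case: (u_min j) => _; apply: Rlt_le.
- by apply: big_Un_cv => i; apply: CV_mult; apply: CV_minus => //; apply: Un_cv_const.
- rewrite -[X in Un_cv _ X]Rplus_0_r; apply: CV_plus; first exact: Un_cv_const.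
  exact: RinvN_cv.
Qed.

Lemma nearest_point_variational K w p :
  is_convex K -> K p -> (forall k, K k -> sqd w p <= sqd w k) ->
  forall k, K k -> 0 <= dot (fun i => p i - w i) (fun i => k i - p i).
Proof.
move=> K_convex Kp p_min k Kk.
apply: (@ge0_of_linear_bound _ (sqd k p)); first exact: dot_ge0.
move=> t t01; have := p_min _ (K_convex _ _ t ltac:(lra) Kp Kk).
rewrite sqd_convex_comb; nra.
Qed.

Lemma closed_cone_separation K w :
  is_cone K -> is_closed K -> ~ K w ->
  exists y, (forall t, K t -> 0 <= dot y t) /\ dot y w < 0.
Proof.
move=> K_cone K_closed Kw; have K_convex := cone_convex K_cone.
have [K_ne [_ K_scale]] := K_cone.
have [p [Kp p_min]] := closed_convex_nearest w K_ne K_convex K_closed.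
have var := nearest_point_variational K_convex Kp p_min.
pose y i := p i - w i.
have dot_sub t : dot y (fun i => t i - p i) = 1 * dot y t + (-1) * dot y p.
  by rewrite /dot -big_lincomb; apply: eq_bigr => i _; ring.
have dot_scale c : dot y (fun i => c * p i - p i) = (c - 1) * dot y p + 0 * dot y p.
  by rewrite /dot -big_lincomb; apply: eq_bigr => i _; ring.
(* testing the cone at 0 and 2 p shows that y is orthogonal to p *)
have yp0 : dot y p = 0.
  have := var _ (K_scale 0 p (Rle_refl 0) Kp); have := var _ (K_scale 2 p ltac:(lra) Kp).
  rewrite /= !dot_scale; lra.
exists y; split=> [t Kt|]; first by have := var t Kt; rewrite dot_sub; lra.
have -> : dot y w = 1 * dot y p + (-1) * dot y y.
  by rewrite /dot -big_lincomb; apply: eq_bigr => i _; rewrite /y; ring.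
suff : dot y y <> 0 by have := dot_ge0 y; lra.
move=> yy0; apply: Kw; have -> : w = p; last exact: Kp.
apply: functional_extensionality => i.
by have := dot_eq0 i yy0; rewrite /y; lra.
Qed.

End Vectors.

Section MatrixOfMat.
Local Open Scope ring_scope.

Definition mx {m n : nat} (A : Mat m n) : 'M[R]_(m, n) := \matrix_(i, j) A i j.
Definition cv {n : nat} (x : Vec n) : 'cV[R]_n := \matrix_(i, j) x i.

Lemma mx_mmul m p q (A : Mat m p) (B : Mat p q) : mx (mmul A B) = mx A *m mx B.
Proof. by apply/matrixP=> i j; rewrite !mxE; apply: eq_bigr => k _; rewrite !mxE. Qed.

Lemma cv_mvec m p (A : Mat m p) (x : Vec p) : cv (mvec A x) = mx A *m cv x.
Proof. by apply/matrixP=> i j; rewrite !mxE; apply: eq_bigr => k _; rewrite !mxE. Qed.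

Lemma mx_trmat m n (A : Mat m n) : mx (trmat A) = (mx A)^T.
Proof. by apply/matrixP=> i j; rewrite !mxE. Qed.

Lemma mx_idmat n : mx (idmat n) = 1%:M.
Proof. by apply/matrixP=> i j; rewrite !mxE /idmat; case: (i == j). Qed.

Lemma cv_add n (x y : Vec n) : cv (fun i => Rplus (x i) (y i)) = cv x + cv y.
Proof. by apply/matrixP=> i j; rewrite !mxE. Qed.

Lemma cv_sub n (x y : Vec n) : cv (fun i => Rminus (x i) (y i)) = cv x - cv y.
Proof. by apply/matrixP=> i j; rewrite !mxE. Qed.

Lemma cv_zerovec n : cv (zerovec n) = 0.
Proof. by apply/matrixP=> i j; rewrite !mxE. Qed.

Lemma cv_inj n : injective (@cv n).
Proof.
move=> x y /matrixP eq_xy; apply: functional_extensionality => i.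
by have := eq_xy i ord0; rewrite !mxE.
Qed.

Lemma dot_mx n (x y : Vec n) : dot x y = ((cv x)^T *m cv y) ord0 ord0.
Proof. by rewrite !mxE; apply: eq_bigr => k _; rewrite !mxE. Qed.

Lemma weight_mx n (W : Mat n n) : is_weight W -> (mx W)^T = mx W /\ mx W *m mx W = 1%:M.
Proof. by move=> [W_sym W_sq]; rewrite -mx_trmat W_sym -mx_mmul W_sq mx_idmat. Qed.

End MatrixOfMat.

Section IndefinitePseudoinverse.
Local Open Scope ring_scope.
Variables (F : comPzRingType) (m n : nat).
Variables (M : 'M[F]_m) (N : 'M[F]_n) (A : 'M[F]_(m, n)) (D : 'M[F]_(n, m)).
Hypotheses (M_sym : M^T = M) (M_sq : M *m M = 1%:M).
Hypotheses (N_sym : N^T = N) (N_sq : N *m N = 1%:M).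
Hypothesis MA_AN : M *m A = A *m N.
(* the first three equations of is_imp *)
Hypotheses (imp1 : A *m N *m D *m M *m A = A)
           (imp2 : D *m M *m A *m N *m D = D)
           (imp3 : M *m (A *m N *m D)^T *m M = A *m N *m D).

Lemma conj_weights_A : M *m A *m N = A.
Proof. by rewrite MA_AN -mulmxA N_sq mulmx1. Qed.

Lemma trmx_A_weights : A^T *m M = N *m A^T.
Proof. by rewrite -{1}M_sym -trmx_mul MA_AN trmx_mul N_sym. Qed.

Lemma imp_mulmx_sym : A *m D = D^T *m A^T.
Proof.
rewrite -{1}conj_weights_A -!mulmxA (mulmxA A N D) -imp3.
rewrite !mulmxA M_sq mul1mx !trmx_mul N_sym -!mulmxA trmx_A_weights.
by rewrite (mulmxA N N) N_sq mul1mx.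
Qed.

Lemma imp_mulmxK : A *m D *m A = A.
Proof.
have ANDA : A *m N *m D *m A = A *m N.
  by rewrite -{3}imp1 -(mulmxA _ M A) MA_AN !mulmxA -(mulmxA _ N N) N_sq mulmx1.
rewrite -{1}conj_weights_A -(mulmxA M A N) -(mulmxA M) -(mulmxA M) ANDA.
by rewrite mulmxA conj_weights_A.
Qed.

Lemma imp_trmx_mulmxK : A^T *m A *m D = A^T.
Proof. by rewrite -mulmxA imp_mulmx_sym mulmxA -!trmx_mul mulmxA imp_mulmxK. Qed.

Lemma imp_factor_trmx : D = D *m D^T *m A^T.
Proof.
rewrite -{1}imp2 -(mulmxA _ A N) -(mulmxA _ (A *m N) D) -imp3 !mulmxA.
rewrite -(mulmxA D M M) M_sq mulmx1 !trmx_mul N_sym -!mulmxA trmx_A_weights !mulmxA.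
by rewrite -(mulmxA _ N N) N_sq mulmx1.
Qed.

End IndefinitePseudoinverse.

Section WeightedSpaces.
Local Open Scope ring_scope.

Lemma mvec_weightK n (W : Mat n n) (y : Vec n) : is_weight W -> mvec W (mvec W y) = y.
Proof. by move=> /weight_mx [_ W_sq]; apply: cv_inj; rewrite !cv_mvec mulmxA W_sq mul1mx. Qed.

Lemma iip_weightK n (W : Mat n n) (y t : Vec n) : is_weight W -> iip W (mvec W y) t = dot y t.
Proof.
move=> /weight_mx [W_sym W_sq]; rewrite /iip !dot_mx !cv_mvec trmx_mul W_sym.
by rewrite -mulmxA (mulmxA (mx W)) W_sq mul1mx.
Qed.

Lemma iipC n (W : Mat n n) (x y : Vec n) : trmat W = W -> iip W x y = iip W y x.
Proof.
move=> W_sym; have W_mx_sym : (mx W)^T = mx W by rewrite -mx_trmat W_sym.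
rewrite /iip !dot_mx !cv_mvec -[in RHS]W_mx_sym -[in RHS](trmxK (cv x)).
by rewrite -!trmx_mul [in RHS]mxE mulmxA.
Qed.

Variables (m n : nat) (M : Mat m m) (N : Mat n n) (A : Mat m n) (D : Mat n m).
Hypotheses (wM : is_weight M) (wN : is_weight N) (MA_AN : mmul M A = mmul A N).
Hypothesis D_imp : is_imp M N A D.

Let M_sym := proj1 (weight_mx wM).
Let M_sq := proj2 (weight_mx wM).
Let N_sym := proj1 (weight_mx wN).
Let N_sq := proj2 (weight_mx wN).
Let MA_AN_mx : mx M *m mx A = mx A *m mx N.
Proof. by rewrite -!mx_mmul MA_AN. Qed.
Let imp1 : mx A *m mx N *m mx D *m mx M *m mx A = mx A.
Proof. by have := f_equal mx (proj1 D_imp); rewrite /imul !mx_mmul. Qed.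
Let imp2 : mx D *m mx M *m mx A *m mx N *m mx D = mx D.
Proof. by have := f_equal mx (proj1 (proj2 D_imp)); rewrite /imul !mx_mmul. Qed.
Let imp3 : mx M *m (mx A *m mx N *m mx D)^T *m mx M = mx A *m mx N *m mx D.
Proof.
by have := f_equal mx (proj1 (proj2 (proj2 D_imp))); rewrite /imul /iadj !mx_mmul mx_trmat !mx_mmul.
Qed.

Lemma iip_adjoint_Adag (x : Vec m) (s : Vec n) :
  iip M x (imulv N (imul N (iadj N M D) (idmat n)) s) = dot (mvec D x) (mvec N s).
Proof.
rewrite /iip /imulv /imul /iadj !dot_mx !cv_mvec !mx_mmul mx_trmat mx_idmat mulmx1.
rewrite -(mulmxA _ (mx N) (mx N)) N_sq mulmx1 !mulmxA -(mulmxA _ (mx M) (mx M)) M_sq.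
by rewrite mulmx1 trmx_mul.
Qed.

Lemma imulv_A (s : Vec n) : imulv N (imul N A (idmat n)) s = mvec A s.
Proof.
apply: cv_inj; rewrite /imulv /imul !cv_mvec !mx_mmul mx_idmat mulmx1.
by rewrite -(mulmxA (mx A)) N_sq mulmx1.
Qed.

Lemma imulv_adjoint_A (z : Vec m) :
  imulv M (iadj M N (imul N A (idmat n))) z = mvec (trmat A) z.
Proof.
apply: cv_inj; rewrite /imulv /imul /iadj !cv_mvec !mx_mmul mx_trmat !mx_mmul mx_idmat.
rewrite mulmx1 trmx_mul N_sym (mulmxA (mx N) (mx N)) N_sq mul1mx mx_trmat.
by rewrite -(mulmxA _ (mx M) (mx M)) M_sq mulmx1.
Qed.

Lemma imulv_Adag_A (s : Vec n) : imulv N (imul M D A) s = mvec D (mvec A s).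
Proof.
apply: cv_inj; rewrite /imulv /imul !cv_mvec !mx_mmul -!mulmxA (mulmxA (mx M)).
by rewrite (mulmxA (mx M *m mx A)) (conj_weights_A N_sq MA_AN_mx).
Qed.

Lemma trmat_A_residual (x : Vec m) :
  mvec (trmat A) (fun i => Rminus (x i) (mvec A (mvec D x) i)) = zerovec n.
Proof.
apply: cv_inj; rewrite cv_mvec cv_sub mulmxBr !cv_mvec mx_trmat !mulmxA.
by rewrite (imp_trmx_mulmxK M_sym M_sq N_sym N_sq MA_AN_mx imp1 imp3) subrr cv_zerovec.
Qed.

Lemma Adag_ker_trmat (z : Vec m) : mvec (trmat A) z = zerovec n -> mvec D z = zerovec n.
Proof.
move=> /(f_equal cv); rewrite cv_mvec cv_zerovec mx_trmat => Az0.
apply: cv_inj; rewrite cv_mvec cv_zerovec.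
by rewrite (imp_factor_trmx M_sym M_sq N_sym N_sq MA_AN_mx imp2 imp3) -!mulmxA Az0 !mulmx0.
Qed.

Local Open Scope R_scope.
Variable K : vset n.

Lemma idual_adjoint_subset : is_cone K -> is_closed K ->
  vsubset (idual M (iimage N (imul N (iadj N M D) (idmat n)) (idual N K)))
          (msum (iimage N (imul N A (idmat n)) K)
                (inull M (iadj M N (imul N A (idmat n))))).
Proof.
move=> K_cone K_closed x x_dual.
have KDx : K (mvec D x).
  apply: NNPP => notK.
  have [y [y_dualK y_neg]] := closed_cone_separation K_cone K_closed notK.
  have Ny_dual : idual N K (mvec N y).
    by move=> t Kt; rewrite iip_weightK //; apply: y_dualK.
  have := x_dual _ (ex_intro _ (mvec N y) (conj Ny_dual erefl)).
  by rewrite iip_adjoint_Adag mvec_weightK // dotC; lra.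
exists (mvec A (mvec D x)), (fun i => x i - mvec A (mvec D x) i); split; [|split].
- by exists (mvec D x); rewrite imulv_A.
- by rewrite /inull imulv_adjoint_A trmat_A_residual.
- by apply: functional_extensionality => i; ring.
Qed.

Lemma msum_subset_idual_adjoint :
  vsubset (iimage N (imul M D A) K) K ->
  vsubset (msum (iimage N (imul N A (idmat n)) K)
                (inull M (iadj M N (imul N A (idmat n)))))
          (idual M (iimage N (imul N (iadj N M D) (idmat n)) (idual N K))).
Proof.
move=> DAK_sub _ [_ [z [[s [Ks ->]] [z_null ->]]]] _ [t [t_dual ->]].
rewrite /inull imulv_adjoint_A in z_null.
rewrite iip_adjoint_Adag imulv_A.
have -> : mvec D (fun i => mvec A s i + z i) = mvec D (mvec A s).
  apply: cv_inj; rewrite cv_mvec cv_add mulmxDr -!cv_mvec (Adag_ker_trmat z_null).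
  by rewrite cv_zerovec addr0.
change (0 <= iip N (mvec D (mvec A s)) t); rewrite iipC; last exact: proj1 wN.
by apply: t_dual; apply: DAK_sub; exists s; rewrite imulv_Adag_A.
Qed.

End WeightedSpaces.

Theorem lemma3p6 (m n : nat) (M : Mat m m) (N : Mat n n) (A : Mat m n)
  (Adag : Mat n m) (K : vset n) :
  is_weight M -> is_weight N ->
  mmul M A = mmul A N ->
  is_imp M N A Adag ->
  is_cone K -> is_closed K ->
  vsubset
    (idual M (iimage N (imul N (iadj N M Adag) (idmat n)) (idual N K)))
    (msum (iimage N (imul N A (idmat n)) K)
          (inull M (iadj M N (imul N A (idmat n)))))
  /\
  (vsubset (iimage N (imul M Adag A) K) K ->
   forall x : Vec m,
     idual M (iimage N (imul N (iadj N M Adag) (idmat n)) (idual N K)) x <->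
     msum (iimage N (imul N A (idmat n)) K)
          (inull M (iadj M N (imul N A (idmat n)))) x).
Proof.
move=> wM wN MA_AN Adag_imp K_cone K_closed.
have sub := idual_adjoint_subset wM wN MA_AN Adag_imp K_cone K_closed.
split=> // DAK_sub x; split; first exact: sub.
exact: (msum_subset_idual_adjoint wM wN MA_AN Adag_imp DAK_sub (x := x)).
Qed.
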